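(* Let $n\ge1$ and \[P^n=\Big\{x\in[0,4]^n:\sum_{i\in S}x_i+\sum_{i\notin S}(4-x_i)\ge\tfrac12\ \ \forall S\subseteq\{1,\dots,n\}\Big\},\] with all variables integer. Then every complete branch-and-bound tree for $P^n\cap\mathbb{Z}^n$ (with root label $[0,4]^n$) has at least $2\cdot2^n-1$ leaf nodes.
   Context: A branch-and-bound tree for $P^n\cap\mathbb{Z}^n$ is a rooted binary tree whose nodes are labeled by polyhedra: the root is labeled $[0,4]^n$, and each non-leaf node labeled $D'$ has exactly two children labeled $D'\cap\{x:x_i\le t\}$ and $D'\cap\{x:x_i\ge t+1\}$ for some $i\in\{1,\dots,n\}$ and $t\in\mathbb{Z}$. The tree is complete if $\mathrm{conv}(P^n\cap\mathbb{Z}^n)=\mathrm{conv}\big(\bigcup_{N\text{ leaf}}(N\cap P^n)\big)$. The size of a tree is its number of leaf nodes. *)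

From HB Require Import structures.
From mathcomp Require Import all_boot all_order all_algebra.
From Stdlib Require Rdefinitions.
From mathcomp Require Import Rstruct.
Set Implicit Arguments. Unset Strict Implicit. Unset Printing Implicit Defensive.
Import Order.TTheory GRing.Theory Num.Theory.
Local Open Scope ring_scope.

Definition vec (n : nat) := 'rV[Rdefinitions.R]_n.

Definition cube (n : nat) (x : vec n) : Prop :=
  forall i : 'I_n, 0 <= x 0 i <= 4.

Definition Pn (n : nat) (x : vec n) : Prop :=
  cube x /\
  forall S : {set 'I_n},
    1 / 2 <= \sum_(i in S) x 0 i + \sum_(i in ~: S) (4 - x 0 i).

Definition integral (n : nat) (x : vec n) : Prop :=
  forall i : 'I_n, exists z : int, x 0 i = z%:~R.

Definition conv (n : nat) (A : vec n -> Prop) (x : vec n) : Prop :=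
  exists (k : nat) (w : 'I_k -> Rdefinitions.R) (p : 'I_k -> vec n),
    [/\ forall j, 0 <= w j, \sum_(j < k) w j = 1, forall j, A (p j)
      & x = \sum_(j < k) w j *: p j].

(* a branch-and-bound tree: a leaf, or a branching on x_i <= t / x_i >= t+1 *)
Inductive bbtree (n : nat) : Type :=
| Leaf : bbtree n
| Branch : 'I_n -> int -> bbtree n -> bbtree n -> bbtree n.

Fixpoint nleaves (n : nat) (T : bbtree n) : nat :=
  match T with
  | Leaf => 1
  | Branch _ _ l r => nleaves l + nleaves r
  end.

Fixpoint in_leaf_union (n : nat) (T : bbtree n) (D : vec n -> Prop)
    (x : vec n) : Prop :=
  match T with
  | Leaf => D x
  | Branch i t l r =>
      in_leaf_union l (fun y => D y /\ y 0 i <= t%:~R) x \/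
      in_leaf_union r (fun y => D y /\ (t + 1)%:~R <= y 0 i) x
  end.

Definition complete (n : nat) (T : bbtree n) : Prop :=
  forall x : vec n,
    conv (fun y => Pn y /\ integral y) x <->
    conv (fun y => in_leaf_union T (@cube n) y /\ Pn y) x.

(* For every S the affine function
     g_S(x) = sum_{i in S} x_i + sum_{i notin S} (4 - x_i)
   takes integer values >= 1/2, hence >= 1, on P^n ∩ Z^n, so g_S >= 1 on
   conv(P^n ∩ Z^n); completeness forces g_S >= 1 at every point of P^n covered
   by a leaf.  Call a box anchored if each of its coordinate intervals is
   [0, b] or [a, 4].  An anchored box that is not a single point contains a
   point of P^n with g_S = 1/2 next to one of its vertices, so it is not a
   leaf.  By induction on the tree, an anchored box with f full coordinates
   (interval [0, 4]) needs at least 2^(f+1) - 1 leaves, and one more if some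
   coordinate is partial (neither a point nor [0, 4]): cutting a full
   coordinate gives two anchored boxes with f - 1 full coordinates, at least
   one of them with a partial coordinate, while a proper cut of a partial
   coordinate leaves one anchored child with the same full coordinates. *)

From mathcomp Require Import all_boot all_order all_algebra.
From mathcomp Require Import Rstruct zify lra.
Set Implicit Arguments. Unset Strict Implicit. Unset Printing Implicit Defensive.
Import Order.TTheory GRing.Theory Num.Theory.
Local Open Scope ring_scope.

Local Notation R := Rdefinitions.R.

Lemma conv_self n (A : vec n -> Prop) (x : vec n) : A x -> conv A x.
Proof.
move=> Ax; exists 1%N, (fun _ => 1), (fun _ => x).
by split=> //; rewrite big_ord1 ?scale1r.
Qed.

Section VertexDistance.
Variable n : nat.
Implicit Types (S : {set 'I_n}) (x : vec n).

(* For [x] in the cube this is the l1 distance from [x] to the vertex that is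
   0 on [S] and 4 off [S]. *)
Definition vertex_dist (S : {set 'I_n}) (x : vec n) : R :=
  \sum_j (if j \in S then x 0 j else 4 - x 0 j).

Definition far_from_vertices (x : vec n) : Prop :=
  forall S, 1 <= vertex_dist S x.

Lemma vertex_distE S x :
  \sum_(j in S) x 0 j + \sum_(j in ~: S) (4 - x 0 j) = vertex_dist S x.
Proof.
rewrite /vertex_dist [RHS](bigID (mem S)) /=.
congr (_ + _); first by apply: eq_bigr => j ->.
by apply: eq_big => [j | j]; rewrite ?inE // => /negbTE->.
Qed.

Lemma Pn_vertex_dist S x : Pn x -> 1 / 2 <= vertex_dist S x.
Proof. by case=> _ /(_ S); rewrite vertex_distE. Qed.

Lemma integral_vertex_dist S x : integral x -> vertex_dist S x \is a Num.int.
Proof.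
move=> xZ; apply: rpred_sum => j _; have [z ->] := xZ j.
by case: (j \in S); rewrite ?rpredB ?intr_int ?natr_int.
Qed.

Lemma integral_Pn_far x : Pn x -> integral x -> far_from_vertices x.
Proof.
move=> Px xZ S; have := Pn_vertex_dist S Px.
have /intrP[m ->] := integral_vertex_dist S xZ.
have half_gt0 : (0 : R) < 1 / 2 by lra.
move=> /(lt_le_trans half_gt0); rewrite ltr0z => m_gt0.
by rewrite ler1z.
Qed.

Lemma vertex_dist_combination S k (w : 'I_k -> R) (p : 'I_k -> vec n) :
  \sum_j w j = 1 ->
  vertex_dist S (\sum_j w j *: p j) = \sum_j w j * vertex_dist S (p j).
Proof.
move=> w1; rewrite /vertex_dist.
under eq_bigr => i _ do rewrite summxE.
under [RHS]eq_bigr => j _ do rewrite mulr_sumr.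
rewrite [RHS]exchange_big /=; apply: eq_bigr => i _.
case: (i \in S); first by apply: eq_bigr => j _; rewrite mxE.
rewrite -[4 in LHS]mulr1 -w1 mulr_sumr -sumrB.
by apply: eq_bigr => j _; rewrite mxE mulrBr mulrC.
Qed.

Lemma conv_far_from_vertices (A : vec n -> Prop) x :
  (forall y, A y -> far_from_vertices y) -> conv A x -> far_from_vertices x.
Proof.
move=> Afar [k [w [p [w_ge0 w1 Ap ->]]]] S.
rewrite vertex_dist_combination // -[1]w1.
by apply: ler_sum => j _; rewrite -[leLHS]mulr1 ler_wpM2l // Afar.
Qed.

Lemma vertex_dist_ge_coord S x i : cube x ->
  (if i \in S then x 0 i else 4 - x 0 i) <= vertex_dist S x.
Proof.
move=> xC; rewrite /vertex_dist (bigD1 i) //= lerDl.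
by apply: sumr_ge0 => j _; have /andP[] := xC j; case: (j \in S); lra.
Qed.

Lemma Pn_of_mid_coord x i : cube x -> 1 / 2 <= x 0 i <= 7 / 2 -> Pn x.
Proof.
move=> xC /andP[lo_i hi_i]; split=> // S; rewrite vertex_distE.
by apply: le_trans (vertex_dist_ge_coord S i xC); case: (i \in S); lra.
Qed.

End VertexDistance.

Section LeafBound.
Variable n : nat.
Implicit Types w : 'I_n -> int.

(* [w] stands for the widths [hi - lo] of a box in [0, 4]^n. *)
Definition full_coords w : {set 'I_n} := [set j | w j == 4].

Definition has_partial w : bool := [exists j, 0 < w j < 4].

Definition leaf_bound w : nat :=
  (2 * 2 ^ #|full_coords w| - 1 + has_partial w)%N.

Lemma full_coords_off w w' i :
  (forall j, j != i -> w' j = w j) -> w' i != 4 ->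
  full_coords w' = full_coords w :\ i.
Proof.
move=> w'E w'i; apply/setP => j; rewrite !inE.
by case: (eqVneq j i) => [->|/w'E->]; rewrite ?(negbTE w'i).
Qed.

Lemma has_partial_off w w' i :
  (forall j, j != i -> w' j = w j) -> ~~ (0 < w i < 4) ->
  has_partial w -> has_partial w'.
Proof.
move=> w'E wi /existsP[j wj]; apply/existsP; exists j.
by rewrite w'E //; apply: contraNneq wi => <-.
Qed.

Lemma has_partial_at w i : 0 < w i < 4 -> has_partial w.
Proof. by move=> wi; apply/existsP; exists i. Qed.

Lemma leaf_bound0 w : (forall j, w j = 0) -> leaf_bound w = 1%N.
Proof.
move=> w0; rewrite /leaf_bound.
have -> : full_coords w = set0 by apply/setP => j; rewrite !inE w0.
have -> : has_partial w = false.
  by apply/negbTE/existsPn => j; rewrite w0 ltxx.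
by rewrite cards0.
Qed.

Lemma leaf_bound_full w :
  (forall j, w j = 4) -> leaf_bound w = (2 * 2 ^ n - 1)%N.
Proof.
move=> w4; rewrite /leaf_bound.
have -> : full_coords w = setT by apply/setP => j; rewrite !inE w4.
have -> : has_partial w = false by apply/negbTE/existsPn => j; rewrite w4.
by rewrite cardsT card_ord addn0.
Qed.

Lemma leaf_bound_split_full w wl wr i :
  w i = 4 ->
  (forall j, j != i -> wl j = w j) -> (forall j, j != i -> wr j = w j) ->
  0 <= wl i -> 0 <= wr i -> wl i + wr i = 3 ->
  (leaf_bound w <= leaf_bound wl + leaf_bound wr)%N.
Proof.
move=> wi wlE wrE wl_ge0 wr_ge0 wlr.
have wi_full : ~~ (0 < w i < 4) by rewrite wi.
have partial_gain : (has_partial w + 1 <= has_partial wl + has_partial wr)%N.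
  case: (boolP (has_partial w)) => [pw|_].
    by rewrite (has_partial_off wlE) ?(has_partial_off wrE).
  case: (ltrP 0 (wl i)) => [wl_gt0|wl_le0].
    by rewrite (@has_partial_at wl i) //; apply/andP; split; lia.
  by rewrite (@has_partial_at wr i) ?addn1 //; apply/andP; split; lia.
rewrite /leaf_bound (full_coords_off wlE) ?(full_coords_off wrE); try lia.
rewrite (cardsD1 i) inE wi eqxx expnS.
have : (0 < 2 ^ #|full_coords w :\ i|)%N by rewrite expn_gt0.
move: (2 ^ _)%N partial_gain => X; lia.
Qed.

Lemma leaf_bound_shrink_partial w w' i :
  0 < w i < 4 -> (forall j, j != i -> w' j = w j) -> w' i != 4 ->
  (leaf_bound w <= (leaf_bound w').+1)%N.
Proof.
move=> wi w'E w'i.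
have wi4 : w i != 4 by apply: contraTneq wi => ->.
rewrite /leaf_bound (full_coords_off w'E w'i).
rewrite -(@full_coords_off w w i) // (has_partial_at wi).
lia.
Qed.

End LeafBound.

Section Boxes.
Variable n : nat.
Implicit Types (lo hi : 'I_n -> int) (y : vec n).

Definition box lo hi y : Prop := forall j, (lo j)%:~R <= y 0 j <= (hi j)%:~R.

(* An anchored box contains a vertex of the cube. *)
Definition anchored lo hi : Prop :=
  forall j, (lo j = 0 /\ 0 <= hi j <= 4) \/ (0 <= lo j <= 4 /\ hi j = 4).

Lemma box_cut_le lo hi i t y : hi i <= t -> box lo hi y -> y 0 i <= t%:~R.
Proof.
by move=> hi_t /(_ i)/andP[_ /le_trans]; apply; rewrite ler_int.
Qed.

Lemma box_cut_ge lo hi i t y : t <= lo i -> box lo hi y -> t%:~R <= y 0 i.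
Proof.
by move=> t_lo /(_ i)/andP[+ _]; apply: le_trans; rewrite ler_int.
Qed.

Lemma box_eta_hi lo hi i t y : t <= hi i ->
  box lo [eta hi with i |-> t] y -> box lo hi y /\ y 0 i <= t%:~R.
Proof.
move=> t_hi yB; split; last by have /= := yB i; rewrite eqxx => /andP[].
move=> j; have /= := yB j; case: eqP => [->|_] // /andP[-> /le_trans]/=.
by apply; rewrite ler_int.
Qed.

Lemma box_eta_lo lo hi i t y : lo i <= t ->
  box [eta lo with i |-> t] hi y -> box lo hi y /\ t%:~R <= y 0 i.
Proof.
move=> lo_t yB; split; last by have /= := yB i; rewrite eqxx => /andP[].
move=> j; have /= := yB j; case: eqP => [->|_] // /andP[+ ->].
by rewrite andbT; apply: le_trans; rewrite ler_int.
Qed.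

Lemma anchored_eta_hi lo hi i t : anchored lo hi -> lo i = 0 -> 0 <= t <= 4 ->
  anchored lo [eta hi with i |-> t].
Proof. by move=> A lo0 t04 j /=; case: eqP => [->|_]; [left | exact: A]. Qed.

Lemma anchored_eta_lo lo hi i t : anchored lo hi -> hi i = 4 -> 0 <= t <= 4 ->
  anchored [eta lo with i |-> t] hi.
Proof. by move=> A hi4 t04 j /=; case: eqP => [->|_]; [right | exact: A]. Qed.

Lemma leaf_bound_proper_split lo hi i t (bl br : nat) :
  anchored lo hi -> lo i <= t < hi i -> (0 < bl)%N -> (0 < br)%N ->
  (anchored lo [eta hi with i |-> t] ->
     (leaf_bound ([eta hi with i |-> t] \- lo) <= bl)%N) ->
  (anchored [eta lo with i |-> (t + 1)%R] hi ->
     (leaf_bound (hi \- [eta lo with i |-> (t + 1)%R]) <= br)%N) ->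
  (leaf_bound (hi \- lo) <= bl + br)%N.
Proof.
move=> A /andP[lo_t t_hi] bl_gt0 br_gt0 bound_l bound_r.
have Ai := A i.
have wl_off j : j != i -> ([eta hi with i |-> t] \- lo) j = (hi \- lo) j.
  by move=> /negbTE ji; rewrite /= ji.
have wr_off j :
    j != i -> (hi \- [eta lo with i |-> (t + 1)%R]) j = (hi \- lo) j.
  by move=> /negbTE ji; rewrite /= ji.
have [lo0|/eqP lo_ne0] := eqVneq (lo i) 0.
  have {}bound_l : (leaf_bound ([eta hi with i |-> t] \- lo) <= bl)%N.
    by apply/bound_l/anchored_eta_hi => //; apply/andP; split; lia.
  have [hi4|/eqP hi_ne4] := eqVneq (hi i) 4.
    have {}bound_r :
        (leaf_bound (hi \- [eta lo with i |-> (t + 1)%R]) <= br)%N.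
      by apply/bound_r/anchored_eta_lo => //; apply/andP; split; lia.
    apply: (leq_trans _ (leq_add bound_l bound_r)).
    by apply: (leaf_bound_split_full _ wl_off wr_off) => /=; rewrite ?eqxx; lia.
  apply: (leq_trans _ (leq_add bound_l br_gt0)); rewrite addn1.
  by apply: leaf_bound_shrink_partial wl_off _; rewrite /= ?eqxx; lia.
have hi4 : hi i = 4 by lia.
have {}bound_r : (leaf_bound (hi \- [eta lo with i |-> (t + 1)%R]) <= br)%N.
  by apply/bound_r/anchored_eta_lo => //; apply/andP; split; lia.
apply: (leq_trans _ (leq_add bl_gt0 bound_r)); rewrite add1n.
by apply: leaf_bound_shrink_partial wr_off _; rewrite /= ?eqxx; lia.
Qed.

End Boxes.

Section NearVertex.
Variables (n : nat) (lo : 'I_n -> int) (i : 'I_n).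

Definition near_vertex : vec n :=
  \row_j let d := if j == i then 1 / 2 else 0 in if lo j == 0 then d else 4 - d.

Lemma box_near_vertex hi :
  anchored lo hi -> lo i < hi i -> box lo hi near_vertex.
Proof.
move=> A lt_i j; rewrite mxE /=.
have [lo0|/eqP lo_ne0] := eqVneq (lo j) 0.
  have : (if j == i then 1 else 0) <= hi j.
    by have := A j; case: eqP => [->|]; lia.
  by rewrite -(ler_int R) lo0; case: eqP => _ /= ?; apply/andP; split; lra.
have : lo j <= 4 - (if j == i then 1 else 0) /\ hi j = 4.
  by move: lo_ne0 (A j); case: eqP => [->|]; lia.
case; rewrite -(ler_int R) => + ->.
by case: eqP => _ /= ?; apply/andP; split; lra.
Qed.

Lemma Pn_near_vertex : Pn near_vertex.
Proof.
have cube_nv : cube near_vertex.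
  by move=> j; rewrite mxE /=; case: (j == i); case: (lo j == 0); lra.
apply: (@Pn_of_mid_coord _ _ i cube_nv).
by rewrite mxE eqxx /=; case: (lo i == 0); lra.
Qed.

Lemma vertex_dist_near_vertex :
  vertex_dist [set j | lo j == 0] near_vertex = 1 / 2.
Proof.
rewrite /vertex_dist (bigD1 i) //= big1 => [|j /negbTE ji].
  by rewrite inE mxE eqxx /=; case: (lo i == 0); lra.
by rewrite inE mxE ji /=; case: (lo j == 0); lra.
Qed.

End NearVertex.

Section Trees.
Variable n : nat.
Implicit Types (T : bbtree n) (D : vec n -> Prop) (lo hi : 'I_n -> int).

Definition avoids_vertices T D : Prop :=
  forall y, in_leaf_union T D y -> Pn y -> far_from_vertices y.

Lemma in_leaf_union_sub T D D' : (forall y, D y -> D' y) ->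
  forall y, in_leaf_union T D y -> in_leaf_union T D' y.
Proof.
elim: T D D' => [|i t l IHl r IHr] D D' DD' y /=; first exact: DD'.
by case=> [yl|yr]; [left; apply: IHl yl | right; apply: IHr yr];
  move=> x [/DD' ? ?]; split.
Qed.

Lemma avoids_vertices_sub T D D' :
  (forall y, D' y -> D y) -> avoids_vertices T D -> avoids_vertices T D'.
Proof. by move=> D'D TD y /(in_leaf_union_sub D'D); apply: TD. Qed.

Lemma avoids_vertices_left i t l r D : avoids_vertices (Branch i t l r) D ->
  avoids_vertices l (fun y => D y /\ y 0 i <= t%:~R).
Proof. by move=> TD y yl; apply: TD; left. Qed.

Lemma avoids_vertices_right i t l r D : avoids_vertices (Branch i t l r) D ->
  avoids_vertices r (fun y => D y /\ (t + 1)%:~R <= y 0 i).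
Proof. by move=> TD y yr; apply: TD; right. Qed.

Lemma nleaves_gt0 T : (0 < nleaves T)%N.
Proof. by elim: T => //= _ _ l IHl r _; rewrite addn_gt0 IHl. Qed.

Lemma anchored_leaf_degenerate lo hi :
  anchored lo hi -> avoids_vertices (@Leaf n) (box lo hi) ->
  forall j, (hi \- lo) j = 0.
Proof.
move=> A TD j; apply/eqP; rewrite /= subr_eq0; apply/negPn/negP => /eqP ne.
have lt_j : lo j < hi j by have := A j; lia.
have := TD _ (box_near_vertex A lt_j) (Pn_near_vertex lo j) [set k | lo k == 0].
by rewrite vertex_dist_near_vertex; lra.
Qed.

Lemma leaf_bound_le_nleaves T lo hi :
  anchored lo hi -> avoids_vertices T (box lo hi) ->
  (leaf_bound (hi \- lo) <= nleaves T)%N.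
Proof.
elim: T lo hi => [|i t l IHl r IHr] lo hi A TD /=.
  by rewrite leaf_bound0 // => j; apply: anchored_leaf_degenerate.
have TDl := avoids_vertices_left TD; have TDr := avoids_vertices_right TD.
have [hi_le|t_lt] := lerP (hi i) t.
  apply: (leq_trans _ (leq_addr _ _)); apply: IHl A _.
  by apply: avoids_vertices_sub TDl => y yB; split; last exact: box_cut_le yB.
have [lo_ge|lo_lt] := lerP (t + 1) (lo i).
  apply: (leq_trans _ (leq_addl _ _)); apply: IHr A _.
  by apply: avoids_vertices_sub TDr => y yB; split; last exact: box_cut_ge yB.
apply: (@leaf_bound_proper_split _ _ _ i t _ _ A _
  (nleaves_gt0 l) (nleaves_gt0 r)).
- by apply/andP; split; lia.
- move=> Al; apply: IHl Al _; apply: avoids_vertices_sub TDl => y.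
  by apply: box_eta_hi; apply: ltW.
- move=> Ar; apply: IHr Ar _; apply: avoids_vertices_sub TDr => y.
  by apply: box_eta_lo; lia.
Qed.

End Trees.

Theorem proposition7 (n : nat) (T : bbtree n) :
  (1 <= n)%N -> complete T -> (2 * 2 ^ n - 1 <= nleaves T)%N.
Proof.
(* The bound holds for n = 0 as well. *)
move=> _ TC.
have TD : avoids_vertices T (box (fun=> 0) (fun=> 4)).
  move=> y yT Py.
  apply: (@conv_far_from_vertices _ (fun x => Pn x /\ integral x)).
    by move=> x [Px xZ]; apply: integral_Pn_far.
  by apply/TC; apply: conv_self.
have widths4 (j : 'I_n) : ((fun=> 4) \- (fun=> 0)) j = 4 :> int by rewrite /= subr0.
rewrite -(leaf_bound_full widths4).
by apply: leaf_bound_le_nleaves TD => j; left.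
Qed.
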